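(* Let $n\ge 2$ and let $\mathsf u$ be a subword of $\bm\lambda_n$ with $u_1u_2\cdots u_{n(n-1)}=e$. Then for every integer $k$ and all integers $a,b$ with $0\le b-a<n(n-1)$, $$\big|(u_au_{a+1}\cdots u_b)(k)-k\big|\le n-2,$$ where indices of $\mathsf u$ are taken modulo $n(n-1)$ (i.e. $u_i:=u_{i'}$ with $1\le i'\le n(n-1)$, $i'\equiv i\pmod{n(n-1)}$).
   Context: $\widetilde S_n$ is the group, under composition, of bijections $w:\mathbb Z\to\mathbb Z$ with $w(i+n)=w(i)+n$ and $\sum_{i=1}^n w(i)=\binom{n+1}2$; $s_i=(\!(i,i+1)\!)$ for $i\in\{0,\dots,n-1\}$, where $(\!(i,j)\!)$ swaps $i+kn$ and $j+kn$ for all $k\in\mathbb Z$. $\bm\lambda_n$ is the word $[s_0,\dots,s_{n-1}]$ repeated $n-1$ times, with $j$-th letter $\sigma_j=s_{(j-1)\bmod n}$ (index in $\{0,\dots,n-1\}$). A subword is $\mathsf u=[u_1,\dots,u_{n(n-1)}]$ with each $u_j\in\{\sigma_j,e\}$. *)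

From mathcomp Require Import all_boot all_order all_algebra.
Set Implicit Arguments. Unset Strict Implicit. Unset Printing Implicit Defensive.
Import Order.TTheory GRing.Theory Num.Theory.
Local Open Scope ring_scope.

(* The affine simple transposition s_i = ((i, i+1)) of Z (period n),
   for 0 <= i < n: swaps i + kn and i + 1 + kn for every k. *)
Definition s_aff (n i : nat) (x : int) : int :=
  if (x %% n%:Z)%Z == i%:Z then x + 1
  else if (x %% n%:Z)%Z == ((i.+1 %% n)%N)%:Z then x - 1
  else x.

(* A subword of lambda_n is encoded by a bit sequence u of length n(n-1):
   the letter u_j (1 <= j <= n(n-1)) is sigma_j = s_{(j-1) mod n} if the
   (j-1)-th bit is true, and e otherwise.  letter n u j is u_j for an
   arbitrary integer j, with the index taken modulo n(n-1). *)
Definition letter (n : nat) (u : seq bool) (j : int) : int -> int :=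
  let jj := absz ((j - 1) %% (n * n.-1)%:Z)%Z in
  if nth false u jj then s_aff n (jj %% n) else id.

(* word_prod n u a m = u_a u_{a+1} ... u_{a+m-1} (composition, rightmost
   factor applied first). *)
Fixpoint word_prod (n : nat) (u : seq bool) (a : int) (m : nat) : int -> int :=
  match m with
  | 0 => id
  | m'.+1 => fun x => letter n u a (word_prod n u (a + 1) m' x)
  end.

From mathcomp Require Import all_boot all_order all_algebra.
From mathcomp Require Import zify ring.
Import Order.TTheory GRing.Theory Num.Theory.
Local Open Scope ring_scope.

(* Read u_a ... u_b from the right and let x_s be the image of k under the
   last s letters.  The letter met at step s is s_i with i = b - s - 1 (mod n),
   so in the frame w_s = x_s - (b - s), which rotates with the letters, the
   point advances by one at each step, except that it moves up only by jumping
   over a multiple of n and moves down only by stalling on one.  Hence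
   x_s - floor((w_s - 1) / n) drops by one exactly at the steps where n | w_s.
   Since every rotation of u_1 ... u_(n(n-1)) = e is again e, x has period
   n(n-1), during which w passes exactly n - 1 multiples of n.  A rise of n - 1
   within m <= n(n-1) steps must pass all of them by step m without any step
   at a multiple of n; afterwards w stays below the next multiple of n for the
   rest of the period, so x cannot come back down to its initial value. *)

Lemma divzS (z d : int) :
  0 < d -> ((z + 1) %/ d)%Z = (z %/ d)%Z + (d %| z + 1)%Z%:R.
Proof.
move=> d_gt0; have d_neq0 : d != 0 by rewrite gt_eqF.
have r_ge0 := modz_ge0 z d_neq0; have r_lt := ltz_pmod z d_gt0.
have -> : (d %| z + 1)%Z = (d %| (z %% d)%Z + 1)%Z.
  by apply/dvdz_mod0P/dvdz_mod0P; rewrite modzDml.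
rewrite {1}(divz_eq z d) -addrA divzMDl //; congr (_ + _).
have [r1_lt|r1_ge] := ltrP ((z %% d)%Z + 1) d.
  have /negbTE -> : ~~ (d %| (z %% d)%Z + 1)%Z.
    by apply/negP => /dvdz_mod0P; rewrite modz_small; lia.
  by rewrite divz_small //; lia.
have -> : (z %% d)%Z + 1 = d by lia.
by rewrite divzz dvdzz d_neq0.
Qed.

Lemma s_affE n i y : (i < n)%N ->
  s_aff n i y = if (n%:Z %| y - i%:Z)%Z then y + 1
                else if (n%:Z %| y - i%:Z - 1)%Z then y - 1 else y.
Proof.
move=> lt_in; rewrite /s_aff.
have -> : ((y %% n%:Z)%Z == i%:Z) = (n%:Z %| y - i%:Z)%Z.
  by rewrite -eqz_mod_dvd modz_nat modn_small.
have -> : ((y %% n%:Z)%Z == (i.+1 %% n)%N%:Z) = (n%:Z %| y - i%:Z - 1)%Z.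
  by rewrite -modz_nat (_ : y - i%:Z - 1 = y - i.+1%:Z) ?eqz_mod_dvd //; lia.
by [].
Qed.

Lemma s_aff_invol n i : (1 < n)%N -> (i < n)%N -> involutive (s_aff n i).
Proof.
move=> n_gt1 lt_in y; have n_ndvd1 : ~~ (n%:Z %| 1)%Z by rewrite dvdz1; lia.
rewrite [s_aff n i y]s_affE //.
case: ifPn => [dvd0|ndvd0]; last case: ifPn => [dvd1|ndvd1].
- have /negbTE ndvd : ~~ (n%:Z %| y + 1 - i%:Z)%Z.
    apply: contra n_ndvd1 => dvd; have := rpredB dvd dvd0.
    by rewrite (_ : y + 1 - i%:Z - (y - i%:Z) = 1) //; ring.
  rewrite s_affE // ndvd (_ : y + 1 - i%:Z - 1 = y - i%:Z) ?dvd0 ?addrK //.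
  by ring.
- by rewrite s_affE // (_ : y - 1 - i%:Z = y - i%:Z - 1) ?dvd1 ?subrK //; ring.
- by rewrite s_affE // (negbTE ndvd0) (negbTE ndvd1).
Qed.

Lemma letter_cases n u j y : (1 < n)%N ->
  [\/ letter n u j y = y,
      letter n u j y = y + 1 /\ (n%:Z %| y - j + 1)%Z
    | letter n u j y = y - 1 /\ (n%:Z %| y - j)%Z].
Proof.
move=> n_gt1; rewrite /letter; set N := (n * n.-1)%N.
set jj := absz _; set i := (jj %% n)%N.
case: ifP => _; last exact: Or31.
have i_dvd : (n%:Z %| i%:Z - (j - 1))%Z.
  have N_neq0 : N%:Z != 0 by rewrite /N; lia.
  rewrite -eqz_mod_dvd -modz_nat modz_mod /jj gez0_abs ?modz_ge0 //; apply/eqP.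
  have -> : N%:Z = n.-1%:Z * n%:Z by rewrite /N PoszM mulrC.
  by rewrite [in RHS](divz_eq (j - 1) (n.-1%:Z * n%:Z)) mulrA modzMDl.
rewrite s_affE ?ltn_mod; last by lia.
have -> : (n%:Z %| y - j + 1)%Z = (n%:Z %| y - i%:Z)%Z.
  rewrite (_ : y - j + 1 = y - i%:Z + (i%:Z - (j - 1))) ?(rpredDr _ i_dvd) //.
  by ring.
have -> : (n%:Z %| y - j)%Z = (n%:Z %| y - i%:Z - 1)%Z.
  rewrite (_ : y - j = y - i%:Z - 1 + (i%:Z - (j - 1))) ?(rpredDr _ i_dvd) //.
  by ring.
by case: ifP => _; [apply: Or32 | case: ifP => _; [apply: Or33 | apply: Or31]].
Qed.

Lemma letter_invol n u j : (1 < n)%N -> involutive (letter n u j).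
Proof.
move=> n_gt1; rewrite /letter; case: ifP => _ //.
by apply: s_aff_invol; rewrite ?ltn_mod; lia.
Qed.

Lemma letter_addN n u j : letter n u (j + (n * n.-1)%:Z) = letter n u j.
Proof. by rewrite /letter addrAC modzDr. Qed.

Lemma word_prodD n u a m p x :
  word_prod n u a (m + p) x = word_prod n u a m (word_prod n u (a + m%:Z) p x).
Proof.
elim: m a => [|m IHm] a /=; first by rewrite addr0.
by rewrite IHm -addrA -PoszD add1n.
Qed.

(* Both sides say that the product of the n(n-1) - 1 letters following u_a
   is the involution letter n u a, as letter n u (a + n(n-1)) = letter n u a. *)
Lemma word_prod_rotate n u a : (1 < n)%N ->
  word_prod n u a (n * n.-1) =1 id <-> word_prod n u (a + 1) (n * n.-1) =1 id.
Proof.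
move=> n_gt1; have [N' eN] : exists N', (n * n.-1)%N = N'.+1.
  by exists (n * n.-1).-1; rewrite prednK // muln_gt0; lia.
have rot_l y : word_prod n u a (n * n.-1) y
               = letter n u a (word_prod n u (a + 1) N' y) by rewrite eN.
have rot_r y : word_prod n u (a + 1) (n * n.-1) y
               = word_prod n u (a + 1) N' (letter n u a y).
  rewrite eN -addn1 word_prodD /=.
  by rewrite (_ : a + 1 + N'%:Z = a + (n * n.-1)%:Z) ?letter_addN // eN; lia.
have letterK := letter_invol n u a n_gt1.
split => id_prod y.
- have mid y' : word_prod n u (a + 1) N' y' = letter n u a y'.
    by rewrite -[LHS]letterK -rot_l id_prod.
  by rewrite rot_r mid letterK.
- have mid y' : word_prod n u (a + 1) N' y' = letter n u a y'.
    by rewrite -{1}[y']letterK -rot_r id_prod.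
  by rewrite rot_l mid letterK.
Qed.

Lemma word_prod_cycle_id n u : (1 < n)%N ->
  word_prod n u 1 (n * n.-1) =1 id ->
  forall a, word_prod n u a (n * n.-1) =1 id.
Proof.
move=> n_gt1 id1 a; rewrite -(subrK 1 a).
elim/int_rec: (a - 1) => [|c IHc|c IHc].
- by rewrite add0r.
- rewrite (_ : c.+1%:Z + 1 = c%:Z + 1 + 1); last by lia.
  exact: (word_prod_rotate n u (c%:Z + 1) n_gt1).1.
- apply: (word_prod_rotate n u (- c.+1%:Z + 1) n_gt1).2.
  by rewrite (_ : - (c.+1)%:Z + 1 + 1 = - c%:Z + 1) //; lia.
Qed.

Definition word_prod_end n u (b : int) (s : nat) : int -> int :=
  word_prod n u (b - s%:Z + 1) s.

Lemma word_prod_endS n u b s k :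
  word_prod_end n u b s.+1 k = letter n u (b - s%:Z) (word_prod_end n u b s k).
Proof.
by rewrite /word_prod_end /=; congr (letter _ _ _ (word_prod _ _ _ _ _)); lia.
Qed.

Lemma word_prod_end_period n u b s k :
  (forall a, word_prod n u a (n * n.-1) =1 id) ->
  word_prod_end n u b (s + n * n.-1) k = word_prod_end n u b s k.
Proof.
move=> cycle_id; rewrite /word_prod_end addnC word_prodD cycle_id.
by congr (word_prod _ _ _ _ _); lia.
Qed.

Section BackwardWalk.

Variables (n : nat) (b : int) (x : nat -> int).
Hypothesis n_gt1 : (1 < n)%N.

Let w (s : nat) : int := x s - (b - s%:Z).

Hypothesis x_step : forall s,
  [\/ x s.+1 = x s,
      x s.+1 = x s + 1 /\ (n%:Z %| w s + 1)%Z
    | x s.+1 = x s - 1 /\ (n%:Z %| w s)%Z].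

Let K (z : int) : int := ((z - 1) %/ n%:Z)%Z.
Let psi (s : nat) : int := x s - K (w s).
Let hits (i j : nat) : int := \sum_(i <= s < j) (n%:Z %| w s)%Z%:R.

Lemma K_succ z : K (z + 1) = K z + (n%:Z %| z)%Z%:R.
Proof. by rewrite /K addrK -{1}(subrK 1 z) divzS ?subrK //; lia. Qed.

Lemma K_mono [z1 z2] : z1 <= z2 -> K z1 <= K z2.
Proof. by move=> le_z; apply: lez_pdiv2r; lia. Qed.

Lemma K_add_mul z q : K (z + q * n%:Z) = K z + q.
Proof. by rewrite /K addrAC addrC divzMDl //; lia. Qed.

Lemma w_le_succ s : w s <= w s.+1.
Proof. by rewrite /w; case: (x_step s) => [->|[-> _]|[-> _]]; lia. Qed.

Lemma w_mono [s t] : (s <= t)%N -> w s <= w t.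
Proof. exact: homo_leq lexx (@le_trans _ _) w_le_succ s t. Qed.

Lemma psi_succ s : psi s.+1 = psi s - (n%:Z %| w s)%Z%:R.
Proof.
rewrite /psi; case: (x_step s) => [e|[e up]|[e down]].
- have -> : w s.+1 = w s + 1 by rewrite /w e; lia.
  by rewrite K_succ e; ring.
- have -> : w s.+1 = w s + 1 + 1 by rewrite /w e; lia.
  have /negbTE ndvd : ~~ (n%:Z %| w s)%Z.
    apply/negP => dvd; have := rpredB up dvd.
    by rewrite addrAC subrr add0r dvdz1; lia.
  by rewrite !K_succ up ndvd e /=; ring.
- have -> : w s.+1 = w s by rewrite /w e; lia.
  by rewrite down e /=; ring.
Qed.

Lemma psi_shift t d : psi (t + d) = psi t - hits t (t + d).
Proof.
elim: d => [|d IHd]; first by rewrite addn0 /hits big_geq // subr0.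
by rewrite addnS psi_succ IHd /hits big_nat_recr /= ?leq_addr //; ring.
Qed.

Lemma hits_ge0 i j : 0 <= hits i j.
Proof. by apply: sumr_ge0 => s _; case: (_ %| _)%Z. Qed.

Lemma hits_first i j : (i < j)%N -> (n%:Z %| w i)%Z -> 1 <= hits i j.
Proof. by move=> lt_ij dvd; rewrite /hits big_ltn // dvd lerDl hits_ge0. Qed.

Lemma hits_flat [t1 t2] :
  K (w t1) = K (w t2) -> ~~ (n%:Z %| w t2)%Z -> hits t1 t2 = 0.
Proof.
move=> flat ndvd2; rewrite /hits big_nat_cond big1 //.
move=> s /andP [/andP [le_t1s lt_st2] _].
suff /negbTE -> : ~~ (n%:Z %| w s)%Z by [].
apply/negP => dvd.
have lt_w : w s < w t2.
  rewrite lt_def w_mono 1?ltnW // andbT.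
  by apply: contraNneq ndvd2 => ->.
have := K_mono (w_mono le_t1s); have := K_mono (_ : w s + 1 <= w t2).
by rewrite K_succ dvd -flat; lia.
Qed.

Lemma walk_displacement_le :
  (forall s, x (s + n * n.-1) = x s) ->
  forall t m, (m <= n * n.-1)%N -> x (t + m) - x t <= n%:Z - 2.
Proof.
move=> x_period t m; set N := (n * n.-1)%N in x_period * => le_mN.
have [->|m_gt0] := posnP m; first by rewrite addn0 subrr; lia.
have w_period : w (t + N) = w t + N%:Z by rewrite /w x_period; lia.
have K_period : K (w (t + N)) = K (w t) + (n.-1)%:Z.
  by rewrite w_period /N PoszM mulrC K_add_mul.
have psi_period : psi (t + N) = psi t - (n.-1)%:Z.
  by rewrite /psi x_period K_period; ring.
have psi_tm := psi_shift t m.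
have psi_mN := psi_shift (t + m) (N - m); rewrite -addnA subnKC // in psi_mN.
have K_tm := K_mono (w_mono (leq_addr m t)).
have K_mN : K (w (t + m)) <= K (w (t + N)).
  by apply/K_mono/w_mono; rewrite leq_add2l.
rewrite leNgt; apply/negP => jump.
have [flat hits_tm] : K (w (t + m)) = K (w (t + N)) /\ hits t (t + m) = 0.
  by move: (hits_ge0 t (t + m)) psi_tm; rewrite /psi; lia.
have ndvd_t : ~~ (n%:Z %| w t)%Z.
  by apply/negP => /(hits_first t (t + m)); rewrite hits_tm; lia.
have ndvd_N : ~~ (n%:Z %| w (t + N))%Z.
  rewrite w_period rpredDr; first exact: ndvd_t.
  by rewrite /N PoszM dvdz_mulr.
move: psi_period; rewrite psi_mN psi_tm hits_tm (hits_flat flat ndvd_N); lia.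
Qed.

End BackwardWalk.

Theorem lemma5p12 (n : nat) (u : seq bool) :
  (2 <= n)%N ->
  size u = (n * n.-1)%N ->
  (forall x : int, word_prod n u 1 (n * n.-1) x = x) ->
  forall k a b : int,
    0 <= b - a -> b - a < (n * n.-1)%:Z ->
    `|word_prod n u a (absz (b - a)%R).+1 k - k| <= n%:Z - 2.
Proof.
move=> n_gt1 _ id1 k a b ab_ge0 ab_lt; set M := (absz (b - a)).+1.
pose x s := word_prod_end n u b s k.
have x_step s : [\/ x s.+1 = x s,
    x s.+1 = x s + 1 /\ (n%:Z %| x s - (b - s%:Z) + 1)%Z
  | x s.+1 = x s - 1 /\ (n%:Z %| x s - (b - s%:Z))%Z].
  by rewrite /x word_prod_endS; apply: letter_cases.
have x_period s : x (s + n * n.-1)%N = x s.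
  exact/word_prod_end_period/word_prod_cycle_id.
have le_MN : (M <= n * n.-1)%N by lia.
have bound := @walk_displacement_le n b x n_gt1 x_step x_period.
have := bound 0 M le_MN; have := bound M _ (leq_subr M (n * n.-1)).
rewrite subnKC // -[(n * n.-1)%N]add0n x_period add0n.
have -> : x M = word_prod n u a M k.
  by rewrite /x /word_prod_end; congr (word_prod _ _ _ _ _); lia.
have -> : x 0%N = k by [].
by rewrite ler_norml; lia.
Qed.
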